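(* Let $d\ge 2$ and $F\in(0,1)$, and let $\rho_{\mathrm{dp}}(F)=F|\mathrm{GHZ}_d\rangle\langle\mathrm{GHZ}_d|+\frac{1-F}{2^d-1}\big(I-|\mathrm{GHZ}_d\rangle\langle\mathrm{GHZ}_d|\big)$ be the $d$-qubit depolarized GHZ state, where $|\mathrm{GHZ}_d\rangle=(|0\cdots0\rangle+|1\cdots1\rangle)/\sqrt2$. Let $C(F)=\sum_s\frac{4\lambda^+_s\lambda^-_s}{\lambda^+_s+\lambda^-_s}$ be computed from the eigenvalues $\lambda^\pm_s$ of $\rho_{\mathrm{dp}}(F)$ on the GHZ basis states $|G^\pm_s\rangle$, and let $\eta(F)=d(1-C(F))$. Define $$F_{\mathrm{th,dp}}=2^{-d}+\frac{(2^d-1)\left(2^d-2+\sqrt{(2^d-2)^2+2^{d+3}d}\right)}{2^{2d+1}d}.$$ Then $\eta(F)>1$ if and only if $F>F_{\mathrm{th,dp}}$.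
   Context: GHZ basis on $d$ qubits: for a bit string $s\in\{0,1\}^d$ with complement $\bar s$, and one representative $s$ chosen from each pair $\{s,\bar s\}$, set $|G^\pm_s\rangle=(|s\rangle\pm|\bar s\rangle)/\sqrt2$; these $2^d$ states form an orthonormal basis and $\rho_{\mathrm{dp}}(F)$ is diagonal in it, with eigenvalue $\lambda^\pm_s$ on $|G^\pm_s\rangle$; the sum defining $C$ runs over the $2^{d-1}$ representatives. Interpretation: $\eta(F)$ is the ratio of the quantum Fisher information $d(1-C)$ for estimating $\theta_1=\frac{1}{\sqrt d}\sum_{i}x_i$ (with the phases $x_i$ encoded by $U(x)=\exp[-\frac{i}{2}\sum_i x_i\sigma_z^{(i)}]$) to the value $1$ achieved by the optimal local strategy, so $\eta>1$ means quantum advantage. *)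

From HB Require Import structures.
From mathcomp Require Import all_boot all_order all_algebra.
Set Implicit Arguments. Unset Strict Implicit. Unset Printing Implicit Defensive.
Import Order.TTheory GRing.Theory Num.Theory.
Local Open Scope ring_scope.

(* Computational basis of d qubits: bit strings s : {0,..,d-1} -> {0,1}. *)
Definition bits (d : nat) := {ffun 'I_d -> bool}.

Section GHZ.
Variable R : rcfType.
Variable d : nat.

Definition ket (s : bits d) : bits d -> R := fun x => (x == s)%:R.
Definition bcompl (s : bits d) : bits d := [ffun i => ~~ s i].
Definition zeros : bits d := [ffun _ => false].

Definition isqrt2 : R := (Num.sqrt 2)^-1.

Definition Gplus (s : bits d) : bits d -> R :=
  fun x => isqrt2 * (ket s x + ket (bcompl s) x).
Definition Gminus (s : bits d) : bits d -> R :=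
  fun x => isqrt2 * (ket s x - ket (bcompl s) x).

Definition GHZ : bits d -> R := Gplus zeros.

Definition rho_dp (F : R) : bits d -> bits d -> R :=
  fun x y => F * (GHZ x * GHZ y)
    + (1 - F) / ((2 ^+ d) - 1) * ((x == y)%:R - GHZ x * GHZ y).

(* eigenvalue of a (symmetric) matrix on a unit eigenvector v : <v|rho|v> *)
Definition eigval_on (M : bits d -> bits d -> R) (v : bits d -> R) : R :=
  \sum_(x : bits d) \sum_(y : bits d) v x * M x y * v y.

Definition lam_plus (F : R) (s : bits d) : R := eigval_on (rho_dp F) (Gplus s).
Definition lam_minus (F : R) (s : bits d) : R := eigval_on (rho_dp F) (Gminus s).

(* one representative from each pair {s, s̄}: the one whose first bit is 0 *)
Definition representative (s : bits d) : bool :=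
  [forall i : 'I_d, (val i == 0)%N ==> ~~ s i].

Definition C_dp (F : R) : R :=
  \sum_(s : bits d | representative s)
     4 * lam_plus F s * lam_minus F s / (lam_plus F s + lam_minus F s).

Definition eta_dp (F : R) : R := d%:R * (1 - C_dp F).

Definition F_th_dp : R :=
  (2 ^+ d)^-1 +
  ((2 ^+ d - 1) * (2 ^+ d - 2 + Num.sqrt ((2 ^+ d - 2) ^+ 2 + 2 ^+ (d + 3) * d%:R)))
  / (2 ^+ (2 * d + 1) * d%:R).

End GHZ.

From mathcomp Require Import all_boot all_order all_algebra.
From mathcomp Require Import ring lra zify.
Set Implicit Arguments. Unset Strict Implicit. Unset Printing Implicit Defensive.
Import Order.TTheory GRing.Theory Num.Theory.
Local Open Scope ring_scope.

(* In the GHZ basis rho_dp(F) has eigenvalue F on |GHZ_d> and q = (1 - F)/(2^d - 1)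
   on the 2^d - 1 other basis vectors, so C(F) = 4Fq/(F + q) + (2^d - 2)q.
   Multiplying eta(F) - 1 by the positive (2^d - 1)(1 + (2^d - 2)F) leaves a quadratic
   in F with leading coefficient d 4^d and negative constant term d + 1 - 2^d; its
   roots have opposite signs, and F_th,dp is the positive one. *)

(* With N = 2^d, the eigenvalue of rho_dp(F) on the orthogonal complement of |GHZ_d>. *)
Definition depol_lambda (R : rcfType) (N F : R) : R := (1 - F) / (N - 1).

Lemma succ_lt_exp2 (d : nat) : (2 <= d)%N -> (d.+1 < 2 ^ d)%N.
Proof. by case: d => // d d_ge1; rewrite expnS; have := ltn_expl d (ltnSn 1); lia. Qed.

Section BitComplement.
Variable d : nat.

Lemma bcomplK : involutive (@bcompl d).
Proof. by move=> s; apply/ffunP => i; rewrite !ffunE negbK. Qed.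

Lemma bcompl_inj : injective (@bcompl d).
Proof. exact: inv_inj bcomplK. Qed.

Lemma bcompl_eq (a b : bits d) : (bcompl a == b) = (a == bcompl b).
Proof. by rewrite -{1}(bcomplK b) (inj_eq bcompl_inj). Qed.

Lemma representative_zeros : representative (zeros d).
Proof. by apply/forallP => i; rewrite ffunE implybT. Qed.

Hypothesis d_gt0 : (0 < d)%N.

Lemma bcompl_neq (s : bits d) : (bcompl s == s) = false.
Proof.
by apply/negbTE/eqP => /ffunP /(_ (Ordinal d_gt0)); rewrite ffunE; case: (s _).
Qed.

Lemma representativeE (s : bits d) : representative s = ~~ s (Ordinal d_gt0).
Proof.
apply/forallP/idP => [/(_ (Ordinal d_gt0)) //|s0 i]; apply/implyP => /eqP i0.
by rewrite (_ : i = Ordinal d_gt0) //; apply: val_inj.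
Qed.

Lemma representative_bcompl (s : bits d) :
  representative (bcompl s) = ~~ representative s.
Proof. by rewrite !representativeE ffunE. Qed.

Lemma card_representative : (#|[set s : bits d | representative s]|).*2 = (2 ^ d)%N.
Proof.
set A := [set s : bits d | representative s].
have compl_image : @bcompl d @: A = ~: A.
  by apply/setP => s; rewrite (can_imset_pre _ bcomplK) !inE representative_bcompl.
rewrite -addnn -{2}(card_imset _ bcompl_inj) compl_image cardsC.
by rewrite card_ffun card_bool card_ord.
Qed.

End BitComplement.

(* Also true at q = 0, where both sides vanish because x / 0 = 0. *)
Lemma four_mul_sqr_div_double (R : numFieldType) (q : R) : 4 * q * q / (q + q) = 2 * q.
Proof.
have [->|q_neq0] := eqVneq q 0; first by rewrite !(mulr0, mul0r).
by field; rewrite -mulr2n mulrn_eq0 negb_or q_neq0.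
Qed.

Section GHZSpectrum.
Variables (R : rcfType) (d : nat).

Definition dotp (u v : bits d -> R) : R := \sum_x u x * v x.

Lemma dotp_ket (a : bits d) (v : bits d -> R) : dotp (ket R a) v = v a.
Proof.
rewrite /dotp (bigD1 a) //= /ket eqxx mul1r big1 ?addr0 // => x /negbTE ->.
by rewrite mul0r.
Qed.

Lemma eigval_on_rho_dp (F : R) (v : bits d -> R) :
  eigval_on (rho_dp F) v =
  depol_lambda (2 ^+ d) F * dotp v v
  + (F - depol_lambda (2 ^+ d) F) * dotp v (@GHZ R d) ^+ 2.
Proof.
rewrite /eigval_on; set q := depol_lambda _ F; set G := @GHZ R d.
have row x : \sum_y v x * rho_dp F x y * v y =
             (F - q) * (v x * G x) * dotp v G + q * (v x * v x).
  transitivity (\sum_y ((F - q) * (v x * G x) * (v y * G y) + q * v x * (ket R x y * v y))).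
    by apply: eq_bigr => y _; rewrite /rho_dp /ket /q /G /depol_lambda [y == x]eq_sym; ring.
  rewrite big_split /= -!mulr_sumr -[\sum_i ket R x i * v i]/(dotp (ket R x) v).
  by rewrite dotp_ket -[q * v x * v x]mulrA.
by rewrite (eq_bigr _ (fun x _ => row x)) big_split /= -!mulr_suml -!mulr_sumr /dotp; ring.
Qed.

Lemma two_isqrt2_sqr : 2 * isqrt2 R ^+ 2 = 1.
Proof. by rewrite /isqrt2 exprVn sqr_sqrtr ?ler0n // mulfV ?pnatr_eq0. Qed.

Lemma dotp_Gplus (s : bits d) (v : bits d -> R) :
  dotp (Gplus R s) v = isqrt2 R * (v s + v (bcompl s)).
Proof.
rewrite -!dotp_ket /dotp -big_split mulr_sumr /=.
by apply: eq_bigr => x _; rewrite /Gplus; ring.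
Qed.

Lemma dotp_Gminus (s : bits d) (v : bits d -> R) :
  dotp (Gminus R s) v = isqrt2 R * (v s - v (bcompl s)).
Proof.
rewrite -!dotp_ket /dotp -sumrB mulr_sumr /=.
by apply: eq_bigr => x _; rewrite /Gminus; ring.
Qed.

Lemma GHZ_bcompl (s : bits d) : GHZ R (bcompl s) = GHZ R s.
Proof. by rewrite /GHZ /Gplus /ket bcompl_eq (inj_eq (@bcompl_inj d)) addrC. Qed.

Hypothesis d_gt0 : (0 < d)%N.

Lemma dotp_Gplus_self (s : bits d) : dotp (Gplus R s) (Gplus R s) = 1.
Proof.
rewrite dotp_Gplus /Gplus /ket !eqxx bcompl_neq // [s == _]eq_sym bcompl_neq //=.
by rewrite -[in RHS]two_isqrt2_sqr; ring.
Qed.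

Lemma dotp_Gminus_self (s : bits d) : dotp (Gminus R s) (Gminus R s) = 1.
Proof.
rewrite dotp_Gminus /Gminus /ket !eqxx bcompl_neq // [s == _]eq_sym bcompl_neq //=.
by rewrite -[in RHS]two_isqrt2_sqr; ring.
Qed.

Lemma dotp_Gminus_GHZ (s : bits d) : dotp (Gminus R s) (@GHZ R d) = 0.
Proof. by rewrite dotp_Gminus GHZ_bcompl subrr mulr0. Qed.

Lemma dotp_Gplus_GHZ (s : bits d) : representative s ->
  dotp (Gplus R s) (@GHZ R d) = (s == zeros d)%:R.
Proof.
move=> rep_s; have s_neq_ones : (s == bcompl (zeros d)) = false.
  by apply: contraTF rep_s => /eqP ->; rewrite representative_bcompl // representative_zeros.
rewrite dotp_Gplus GHZ_bcompl /GHZ /Gplus /ket s_neq_ones addr0.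
transitivity (2 * isqrt2 R ^+ 2 * (s == zeros d)%:R); first ring.
by rewrite two_isqrt2_sqr mul1r.
Qed.

Lemma lam_minusE (F : R) (s : bits d) : lam_minus F s = depol_lambda (2 ^+ d) F.
Proof.
by rewrite /lam_minus eigval_on_rho_dp dotp_Gminus_self dotp_Gminus_GHZ; ring.
Qed.

Lemma lam_plusE (F : R) (s : bits d) : representative s ->
  lam_plus F s = if s == zeros d then F else depol_lambda (2 ^+ d) F.
Proof.
move=> rep_s; rewrite /lam_plus eigval_on_rho_dp dotp_Gplus_self dotp_Gplus_GHZ //.
by case: eqP => _ /=; ring.
Qed.

Lemma C_dpE (F : R) : let q := depol_lambda (2 ^+ d) F in
  C_dp d F = 4 * F * q / (F + q) + q * (2 ^+ d - 2).
Proof.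
move=> q; rewrite /C_dp (bigD1 (zeros d)) ?representative_zeros //=.
rewrite lam_plusE ?representative_zeros // lam_minusE eqxx -/q.
rewrite (eq_bigr (fun=> 2 * q)); last first.
  move=> s /andP [rep_s /negbTE nz_s].
  by rewrite lam_plusE // nz_s lam_minusE four_mul_sqr_div_double.
rewrite sumr_const; set n := #|_|.
have card_rest : (n.*2 + 2 = 2 ^ d)%N.
  have n_eq : n = #|[set s | representative s] :\ zeros d|.
    by apply: eq_card => s; rewrite !inE andbC.
  have := card_representative d_gt0.
  by rewrite (cardsD1 (zeros d)) inE representative_zeros -n_eq /=; lia.
by rewrite -mulr_natr -natrX -card_rest natrD addrK -mul2n natrM; ring.
Qed.

End GHZSpectrum.

Section Threshold.
Variable R : rcfType.

Lemma quadratic_gt0_iff (a b c t : R) : 0 < a -> c < 0 -> 0 < t ->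
  (0 < a * t ^+ 2 - b * t + c) = ((b + Num.sqrt (b ^+ 2 - 4 * a * c)) / (2 * a) < t).
Proof.
move=> a_gt0 c_lt0 t_gt0; set s := Num.sqrt _.
have ac_lt0 : a * c < 0 by rewrite pmulr_rlt0.
have s_sqr : s ^+ 2 = b ^+ 2 - 4 * a * c by rewrite sqr_sqrtr //; nra.
have b_lt_s : b < s.
  have s_ge0 : 0 <= s by apply: sqrtr_ge0.
  have [b_lt0|b_ge0] := ltP b 0; first lra.
  by rewrite -(ltr_pXn2r (_ : 0 < 2)%N) ?nnegrE // s_sqr; lra.
have a_neq0 : a != 0 by rewrite gt_eqF.
have c_eq : c = (b ^+ 2 - s ^+ 2) / (4 * a) by rewrite s_sqr; field.
have -> : a * t ^+ 2 - b * t + c =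
          a * ((t - (b + s) / (2 * a)) * (t - (b - s) / (2 * a))).
  by rewrite c_eq; field.
have small_root_lt0 : (b - s) / (2 * a) < 0.
  by rewrite pmulr_llt0 ?invr_gt0 ?subr_lt0 // mulr_gt0.
by rewrite pmulr_rgt0 // pmulr_lgt0 ?subr_gt0 //; lra.
Qed.

Variables (x N F : R).

Let q := depol_lambda N F.
Let b := 2 * x * N + (N - 1) * (N - 2).

Lemma eta_sub1E : N != 1 -> 1 + (N - 2) * F != 0 ->
  x * (1 - (4 * F * q / (F + q) + q * (N - 2))) - 1 =
  (x * N ^+ 2 * F ^+ 2 - b * F + (x - N + 1)) / ((N - 1) * (1 + (N - 2) * F)).
Proof.
move=> N_neq1 den_neq0; rewrite /q /b /depol_lambda.
by field; rewrite subr_eq0 N_neq1 den_neq0.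
Qed.

Lemma threshold_root : 0 < x -> 1 < N ->
  (b + Num.sqrt (b ^+ 2 - 4 * (x * N ^+ 2) * (x - N + 1))) / (2 * (x * N ^+ 2)) =
  N^-1 + (N - 1) * (N - 2 + Num.sqrt ((N - 2) ^+ 2 + N * 8 * x)) / (N ^+ 2 * 2 * x).
Proof.
move=> x_gt0 N_gt1.
have -> : b ^+ 2 - 4 * (x * N ^+ 2) * (x - N + 1) =
          (N - 1) ^+ 2 * ((N - 2) ^+ 2 + N * 8 * x).
  by rewrite /b; ring.
rewrite sqrtrM ?sqr_ge0 // sqrtr_sqr ger0_norm /b; last lra.
by field; rewrite !gt_eqF //; lra.
Qed.

Lemma eta_gt1_iff : 0 < x -> x + 1 < N -> 0 < F -> F < 1 ->
  (1 < x * (1 - (4 * F * q / (F + q) + q * (N - 2)))) =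
  (N^-1 + (N - 1) * (N - 2 + Num.sqrt ((N - 2) ^+ 2 + N * 8 * x)) / (N ^+ 2 * 2 * x) < F).
Proof.
move=> x_gt0 x_lt_N F_gt0 F_lt1.
have NF_gt0 : 0 < (N - 1) * F by apply: mulr_gt0; lra.
have den_gt0 : 0 < (N - 1) * (1 + (N - 2) * F) by apply: mulr_gt0; lra.
have N_neq1 : N != 1 by apply/eqP => N_eq1; lra.
have den_neq0 : 1 + (N - 2) * F != 0 by apply/eqP => den_eq0; lra.
rewrite -subr_gt0 eta_sub1E // pmulr_lgt0 ?invr_gt0 // -threshold_root //; last lra.
by rewrite quadratic_gt0_iff // ?mulr_gt0 ?exprn_gt0 //; lra.
Qed.

End Threshold.

Theorem mainTheorem2 (R : rcfType) (d : nat) (F : R) :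
  (2 <= d)%N -> 0 < F -> F < 1 ->
  (1 < eta_dp d F <-> F_th_dp R d < F).
Proof.
move=> d_ge2 F_gt0 F_lt1.
have d_gt0 : (0 < d)%N by apply: leq_trans d_ge2.
have dR_gt0 : 0 < d%:R :> R by rewrite ltr0n.
have d_lt_N : d%:R + 1 < 2 ^+ d :> R by rewrite natr1 -natrX ltr_nat succ_lt_exp2.
have pow_d3 : 2 ^+ (d + 3) = 2 ^+ d * 8 :> R by rewrite exprD; congr (_ * _); ring.
have pow_2d1 : 2 ^+ (2 * d + 1) = (2 ^+ d) ^+ 2 * 2 :> R by rewrite exprD mulnC exprM.
by rewrite /eta_dp C_dpE // /F_th_dp pow_d3 pow_2d1 eta_gt1_iff.
Qed.
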